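(* Let $G$ be a $k$-tree with at least $k+4$ vertices. Then there do not exist two adjacent vertices $v,w$ of degree exactly $k+1$ such that each of $v$ and $w$ is adjacent to a vertex of degree at most $k$.
   Context: $G$ is a finite simple undirected graph. A $k$-tree is a graph having a vertex ordering $\phi:V\to\{1,\dots,|V|\}$ such that, for every vertex $v$, the set of neighbours of $v$ preceding it in $\phi$ is a clique of size exactly $\min(k,\phi(v)-1)$. *)

From mathcomp Require Import all_boot all_order.
Set Implicit Arguments. Unset Strict Implicit. Unset Printing Implicit Defensive.

Definition simple_graph (T : finType) (e : rel T) : Prop :=
  symmetric e /\ irreflexive e.

Definition nbhd (T : finType) (e : rel T) (v : T) : {set T} := [set w | e v w].
Definition deg (T : finType) (e : rel T) (v : T) : nat := #|nbhd e v|.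

Definition is_clique (T : finType) (e : rel T) (S : {set T}) : Prop :=
  forall x y, x \in S -> y \in S -> x != y -> e x y.

(* k-tree: there is a vertex ordering phi : V -> {1..|V|} (here 0-based,
   phi : T -> 'I_#|T| bijective, so position p (0-based) corresponds to
   phi(v) = p+1) such that for every v, the neighbours of v preceding it
   form a clique of size exactly min(k, phi(v) - 1) = min(k, p). *)
Definition is_ktree (T : finType) (e : rel T) (k : nat) : Prop :=
  simple_graph e /\
  exists phi : T -> 'I_#|T|,
    bijective phi /\
    forall v : T,
      let P := [set w in nbhd e v | (phi w < phi v)%N] in
      is_clique e P /\ #|P| = minn k (phi v).

From mathcomp Require Import all_boot all_order zify.
Set Implicit Arguments. Unset Strict Implicit. Unset Printing Implicit Defensive.

(* In a k-tree every vertex of degree at most k is simplicial of degree k, and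
   every edge lies in a (k+1)-clique, so adjacent vertices have k - 1 common
   neighbours.  Moreover, if a nonempty X has its closed neighbourhood inside a
   set U that misses some vertex, then U \ X has at least k vertices.  For v, w,
   x, y as in the statement, X = {v, w, x, y} has its closed neighbourhood inside
   U = N[v] ∪ N[w]; as |N[v]| = |N[w]| = k + 2 and N[v] ∩ N[w] has at least
   k + 1 vertices, and at least k + 2 when x = y, counting gives |U \ X| < k. *)

Definition back_nbhd (T : finType) (e : rel T) n (phi : T -> 'I_n) (v : T) :=
  [set w in nbhd e v | phi w < phi v].

Definition cnbhd (T : finType) (e : rel T) (v : T) : {set T} := v |: nbhd e v.

Definition ktree_ordering (T : finType) (e : rel T) k (phi : T -> 'I_#|T|) :=
  [/\ symmetric e, irreflexive e, bijective phi &
      forall v, is_clique e (back_nbhd e phi v) /\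
                #|back_nbhd e phi v| = minn k (phi v)].

Lemma card_prefix_le (T : finType) n (f : T -> 'I_n) p :
  injective f -> #|[set w | f w < p]| <= p.
Proof.
move=> f_inj; rewrite cardE -(size_map (fun w => nat_of_ord (f w))).
rewrite -[p in _ <= p](size_iota 0 p); apply: uniq_leq_size.
  by rewrite map_inj_uniq ?enum_uniq // => a b /val_inj /f_inj.
by move=> i /mapP [w]; rewrite mem_enum inE => lt_wp ->; rewrite mem_iota.
Qed.

Lemma clique_setU1 (T : finType) (e : rel T) z (S : {set T}) :
  symmetric e -> is_clique e S -> S \subset nbhd e z -> is_clique e (z |: S).
Proof.
move=> e_sym S_cl /subsetP S_z a b.
case/setU1P=> [->|aS] /setU1P[->|bS] ab; first by rewrite eqxx in ab.
- by have := S_z b bS; rewrite inE.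
- by rewrite e_sym; have := S_z a aS; rewrite inE.
- exact: S_cl.
Qed.

Lemma card_cnbhd (T : finType) (e : rel T) v :
  irreflexive e -> #|cnbhd e v| = (deg e v).+1.
Proof. by move=> e_irr; rewrite cardsU1 inE e_irr. Qed.

Section KTreeOrdering.

Variables (T : finType) (e : rel T) (k : nat) (phi : T -> 'I_#|T|).
Hypothesis phi_ktree : ktree_ordering e k phi.

Let e_sym : symmetric e. Proof. by case: phi_ktree. Qed.
Let e_irr : irreflexive e. Proof. by case: phi_ktree. Qed.
Let phi_bij : bijective phi. Proof. by case: phi_ktree. Qed.
Let phi_inj : injective phi := bij_inj phi_bij.
Let back_clique v : is_clique e (back_nbhd e phi v).
Proof. by case: phi_ktree => _ _ _ /(_ v) []. Qed.
Let card_back v : #|back_nbhd e phi v| = minn k (phi v).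
Proof. by case: phi_ktree => _ _ _ /(_ v) []. Qed.

Local Notation back := (back_nbhd e phi).

Lemma card_back_nbhd_high z : k <= phi z -> #|back z| = k.
Proof. by move=> /minn_idPl <-. Qed.

Lemma back_nbhd_base z : phi z <= k -> back z = [set w | phi w < phi z].
Proof.
move=> z_base; apply/eqP; rewrite eqEcard card_back (minn_idPr z_base).
rewrite card_prefix_le // andbT.
by apply/subsetP=> w; rewrite !inE => /andP[].
Qed.

Lemma base_edge u z : u != z -> phi u <= k -> phi z <= k -> e u z.
Proof.
wlog lt_uz : u z / phi u < phi z => [base_lt uz u_base z_base|uz _ z_base].
  case: (ltngtP (phi u) (phi z)) => [||/val_inj/phi_inj uz'].
  - by move=> ?; apply: base_lt.
  - by move=> ?; rewrite e_sym; apply: base_lt; rewrite // eq_sym.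
  - by rewrite uz' eqxx in uz.
have : u \in back z by rewrite back_nbhd_base // inE.
by rewrite !inE e_sym => /andP[].
Qed.

Lemma closed_back_clique z :
  k <= phi z -> is_clique e (z |: back z) /\ #|z |: back z| = k.+1.
Proof.
move=> z_high; have back_sub : back z \subset nbhd e z.
  by apply/subsetP=> w; rewrite inE => /andP[].
split; first exact: clique_setU1 e_sym (@back_clique z) back_sub.
by rewrite cardsU1 card_back_nbhd_high // !inE ltnn andbF.
Qed.

(* Take the earliest vertex [t] of [X] and the earliest vertex [o] outside [U]:
   either one of them has k earlier neighbours, all of them in [U :\: X], or both
   lie in the initial clique and are adjacent, which is impossible. *)
Lemma card_boundary_ge (X U : {set T}) t0 :
  t0 \in X -> #|U| < #|T| -> (forall z, z \in X -> cnbhd e z \subset U) ->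
  k <= #|U :\: X|.
Proof.
move=> t0X U_small X_closed.
have /subsetPn[o0 _ o0U] : ~~ ([set: T] \subset U).
  by apply: contraL U_small => /subset_leq_card; rewrite cardsT leqNgt.
have X_nbhd z : z \in X -> nbhd e z \subset U.
  by move/X_closed; apply: subset_trans; apply: subsetUr.
case: (arg_minnP (fun z => nat_of_ord (phi z)) t0X) => t tX t_min.
case: (arg_minnP (fun z => nat_of_ord (phi z)) (o0U : [predC U] o0)).
move=> o oU o_min.
have [t_high|t_low] := leqP k (phi t).
  rewrite -(card_back_nbhd_high t_high) subset_leq_card //; apply/subsetP=> w.
  rewrite !inE => /andP[tw wt]; rewrite (subsetP (X_nbhd t tX)) ?inE // andbT.
  by apply: contraTN wt => /t_min; rewrite -leqNgt.
have [o_high|o_low] := leqP k (phi o).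
  rewrite -(card_back_nbhd_high o_high) subset_leq_card //; apply/subsetP=> w.
  rewrite !inE => /andP[ow wo]; apply/andP; split.
    by apply: contraNN oU => /X_nbhd/subsetP; apply; rewrite inE e_sym.
  by apply: contraTT wo; rewrite -leqNgt => /o_min.
have t_neq_o : t != o.
  by apply: contraNneq oU => <-; apply: (subsetP (X_closed t tX)); rewrite setU11.
have /(subsetP (X_nbhd t tX)) : o \in nbhd e t.
  by rewrite inE base_edge // ltnW.
by rewrite (negbTE oU).
Qed.

Hypothesis k_lt_card : k < #|T|.

Lemma clique_through u v : u = v \/ e u v ->
  exists C : {set T}, [/\ is_clique e C, #|C| = k.+1, u \in C & v \in C].
Proof.
wlog le_uv : u v / phi u <= phi v => [sym_case uv|uv].
  case: (leqP (phi u) (phi v)) => [le_uv|/ltnW le_vu]; first exact: sym_case.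
  have [|C [? ? ? ?]] := sym_case v u le_vu; last by exists C.
  by case: uv => [->|uv]; [left|right; rewrite e_sym].
have [v_high|v_low] := leqP k (phi v).
  have [C_cl C_card] := closed_back_clique v_high.
  exists (v |: back v); split; rewrite ?setU11 //.
  case: uv => [->|uv]; rewrite ?setU11 //; apply/setU1P; right.
  rewrite !inE e_sym uv ltn_neqAle le_uv andbT /=.
  by apply: contraTneq uv => /val_inj/phi_inj ->; rewrite e_irr.
have [g phiK gK] := phi_bij; pose z := g (Ordinal k_lt_card).
have z_pos : phi z = k :> nat by rewrite gK.
have [C_cl C_card] := closed_back_clique (eq_leq (esym z_pos)).
exists (z |: back z); split => //; apply/setU1P; right;
  by rewrite back_nbhd_base ?z_pos // inE ?(leq_ltn_trans le_uv v_low).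
Qed.

Lemma deg_le_simplicial x :
  deg e x <= k -> deg e x = k /\ is_clique e (nbhd e x).
Proof.
move=> x_low; have [C [C_cl C_card xC _]] := clique_through (or_introl (erefl x)).
have C_nbhd : C :\ x \subset nbhd e x.
  apply/subsetP=> y; rewrite !inE => /andP[yx yC].
  by apply: C_cl; rewrite // eq_sym.
have card_Cx : #|C :\ x| = k by move: C_card; rewrite (cardsD1 x) xC => -[].
have Cx_nbhd : C :\ x = nbhd e x by apply/eqP; rewrite eqEcard C_nbhd card_Cx.
rewrite /deg -Cx_nbhd card_Cx; split=> // a b.
by rewrite !inE => /andP[_ aC] /andP[_ bC]; apply: C_cl.
Qed.

Lemma card_common_nbhd u v : e u v -> k.-1 <= #|nbhd e u :&: nbhd e v|.
Proof.
move=> uv; have [C [C_cl C_card uC vC]] := clique_through (or_intror uv).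
have u_neq_v : u != v by apply: contraTneq uv => ->; rewrite e_irr.
have sub : C :\: [set u; v] \subset nbhd e u :&: nbhd e v.
  apply/subsetP=> y; rewrite !inE negb_or => /andP[/andP[yu yv] yC].
  by rewrite !C_cl // eq_sym.
apply: leq_trans (subset_leq_card sub).
have uvC : [set u; v] \subset C by rewrite subUset !sub1set uC vC.
by rewrite cardsDS // C_card cards2 u_neq_v subn2.
Qed.

Lemma simplicial_cnbhd_sub x v :
  deg e x <= k -> e x v -> cnbhd e x \subset cnbhd e v.
Proof.
move=> x_low xv; have [_ Nx_cl] := deg_le_simplicial x_low.
apply/subsetP=> z; rewrite !inE => /predU1P[->|xz].
  by rewrite e_sym xv orbT.
by case: (eqVneq z v) => //= zv; apply: Nx_cl; rewrite ?inE // eq_sym.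
Qed.

Lemma card_cnbhdI v w : e v w -> k.+1 <= #|cnbhd e v :&: cnbhd e w|.
Proof.
move=> vw; have v_neq_w : v != w by apply: contraTneq vw => ->; rewrite e_irr.
have sub : v |: (w |: (nbhd e v :&: nbhd e w)) \subset cnbhd e v :&: cnbhd e w.
  apply/subsetP=> z; rewrite !inE => /or3P[/eqP->|/eqP->|/andP[-> ->]].
  - by rewrite eqxx e_sym vw orbT.
  - by rewrite eqxx vw orbT.
  - by rewrite !orbT.
apply: leq_trans (subset_leq_card sub).
rewrite !cardsU1 !inE !e_irr andbF orbF v_neq_w !add1n ltnS.
by case: k (card_common_nbhd vw) => // k' /ltnW.
Qed.

(* The neighbourhood of the simplicial vertex [x] misses exactly one vertex [a] of
   the closed neighbourhood of [v]; the k - 1 common neighbours of the edge [va]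
   must then be the neighbours of [x] other than [v], and [w] is one of them. *)
Lemma cnbhd_sub_of_common_simplicial x v w : deg e x <= k -> e x v -> e x w ->
  v != w -> deg e v = k.+1 -> cnbhd e v \subset cnbhd e w.
Proof.
move=> x_low xv xw v_neq_w dv; have [dx _] := deg_le_simplicial x_low.
have xv_sub := simplicial_cnbhd_sub x_low xv.
have xw_sub := simplicial_cnbhd_sub x_low xw.
have /properP[_ [a av ax]] : cnbhd e x \proper cnbhd e v.
  by rewrite properEcard xv_sub !card_cnbhd // dx dv ltnSn.
have Nv_eq : cnbhd e v = a |: cnbhd e x.
  apply/eqP; rewrite eq_sym eqEcard subUset sub1set av xv_sub.
  by rewrite cardsU1 ax !card_cnbhd // dx dv add1n ltnSn.
have va : e v a.
  move: av; rewrite !inE => /predU1P[av|] //.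
  by move: ax; rewrite av !inE xv orbT.
have common_sub : nbhd e v :&: nbhd e a \subset nbhd e x :\ v.
  apply/subsetP=> z; rewrite !inE => /andP[vz az].
  have : z \in cnbhd e v by rewrite !inE vz orbT.
  rewrite Nv_eq !inE => /or3P[/eqP za|/eqP zx|->].
  - by move: az; rewrite za e_irr.
  - by move: ax; rewrite !inE -zx e_sym az orbT.
  - by rewrite andbT; apply: contraTneq vz => ->; rewrite e_irr.
have card_Nxv : #|nbhd e x :\ v| = k.-1.
  by move: dx; rewrite /deg (cardsD1 v) inE xv => <-.
have common_eq : nbhd e v :&: nbhd e a = nbhd e x :\ v.
  by apply/eqP; rewrite eqEcard common_sub card_Nxv card_common_nbhd.
have aw : e a w.
  have : w \in nbhd e x :\ v.
    by rewrite !inE xw eq_sym v_neq_w.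
  by rewrite -common_eq !inE => /andP[_].
by rewrite Nv_eq subUset sub1set xw_sub andbT !inE e_sym aw orbT.
Qed.

Lemma card_endpoints_cnbhdI v w x y :
  e v w -> deg e v = k.+1 -> deg e w = k.+1 -> e x v -> e y w ->
  deg e x <= k -> deg e y <= k ->
  k + 5 <= #|y |: (x |: [set v; w])| + #|cnbhd e v :&: cnbhd e w|.
Proof.
move=> vw dv dw xv yw x_low y_low.
have [[dx _] [dy _]] := (deg_le_simplicial x_low, deg_le_simplicial y_low).
have v_neq_w : v != w by apply: contraTneq vw => ->; rewrite e_irr.
have x_neq_v : x != v by apply: contraTneq xv => ->; rewrite e_irr.
have y_neq_w : y != w by apply: contraTneq yw => ->; rewrite e_irr.
have x_neq_w : x != w by apply/eqP=> xw; move: dw; rewrite -xw dx => /n_Sn.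
have y_neq_v : y != v by apply/eqP=> yv; move: dv; rewrite -yv dy => /n_Sn.
rewrite !cardsU1 cards1 !inE v_neq_w (negbTE y_neq_v) (negbTE y_neq_w).
rewrite (negbTE x_neq_v) (negbTE x_neq_w) !orbF.
case: (eqVneq y x) => [yx|_] /=.
  rewrite yx in yw.
  have vw_sub := cnbhd_sub_of_common_simplicial x_low xv yw v_neq_w dv.
  by rewrite (setIidPl vw_sub) card_cnbhd // dv addnC.
by rewrite addnC; exact: card_cnbhdI.
Qed.

End KTreeOrdering.

Theorem mainTheorem13 (T : finType) (e : rel T) (k : nat) :
  is_ktree e k -> (k + 4 <= #|T|)%N ->
  ~ (exists v w : T,
       [/\ e v w, deg e v = k.+1, deg e w = k.+1,
           (exists x, e v x /\ (deg e x <= k)%N) &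
           (exists y, e w y /\ (deg e y <= k)%N)]).
Proof.
move=> [[e_sym e_irr] [phi [phi_bij phi_back]]] n_ge.
move=> [v [w [vw dv dw [x [vx x_low]] [y [wy y_low]]]]].
have phiK : ktree_ordering e k phi by [].
have k_lt : k < #|T| by lia.
rewrite e_sym in vx; rewrite e_sym in wy.
pose U := cnbhd e v :|: cnbhd e w; pose I := cnbhd e v :&: cnbhd e w.
pose X := y |: (x |: [set v; w]).
have card_XI : k + 5 <= #|X| + #|I|.
  have := card_endpoints_cnbhdI phiK k_lt vw dv dw vx wy x_low y_low.
  by rewrite -/X -/I.
have card_I : k < #|I| := card_cnbhdI phiK k_lt vw.
have card_UI : #|U| + #|I| = k.+2 + k.+2.
  by rewrite cardsUI !card_cnbhd // dv dw.
have X_closed z : z \in X -> cnbhd e z \subset U.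
  rewrite !inE => /or4P[] /eqP->.
  - exact: subset_trans (simplicial_cnbhd_sub phiK k_lt y_low wy) (subsetUr _ _).
  - exact: subset_trans (simplicial_cnbhd_sub phiK k_lt x_low vx) (subsetUl _ _).
  - exact: subsetUl.
  - exact: subsetUr.
have XU : X \subset U.
  by apply/subsetP=> z /X_closed /subsetP; apply; rewrite setU11.
have U_small : #|U| < #|T| by move: card_UI card_I n_ge; clear; lia.
have := card_boundary_ge phiK (setU11 y _) U_small X_closed.
rewrite cardsDS // -/X; move: card_XI card_UI (subset_leq_card XU); clear; lia.
Qed.
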